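(* Let $n\ge 16$ be even and let $W_{4,n}$ be the $4$-regular Kn\''odel graph. If $n\equiv 0\pmod{10}$ or $n\equiv 4 \pmod{10}$, then $W_{4,n}$ is $\gamma$-stable.
   Context: For an even integer $n\ge 2$ and $1\le\Delta\le\lfloor\log_2 n\rfloor$, the Kn\''odel graph $W_{\Delta,n}$ is the $\Delta$-regular bipartite graph on the $n$ vertices $(i,j)$, $i\in\{1,2\}$, $0\le j\le n/2-1$, in which for every $j$ the vertex $(1,j)$ is adjacent to the vertices $(2,(j+2^k-1)\bmod (n/2))$ for $k=0,1,\dots,\Delta-1$ (and there are no other edges); in particular $W_{4,n}$ is defined for even $n\ge 16$. A set $D$ of vertices of a graph $G$ is dominating if every vertex not in $D$ is adjacent to a vertex of $D$; $\gamma(G)$ is the minimum size of a dominating set. A graph $G$ is $\gamma$-stable if $\gamma(G-u)=\gamma(G)$ for every vertex $u$ of $G$, where $G-u$ is the graph obtained by deleting $u$. *)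

From mathcomp Require Import all_boot.
Set Implicit Arguments. Unset Strict Implicit. Unset Printing Implicit Defensive.

(* Knodel graph W_{Delta,n} with m = n/2.  Vertex (i,j), i in {1,2}, is
   encoded as (b, j) with b = false for i = 1 and b = true for i = 2,
   j : 'I_m.  (1,j) ~ (2, (j + 2^k - 1) mod m) for k = 0..Delta-1. *)
Definition knodel_vertex (m : nat) := (bool * 'I_m)%type.

Definition knodel_arc (Delta m : nat) (j j' : 'I_m) : bool :=
  [exists k : 'I_Delta, val j' == (val j + 2 ^ val k - 1) %% m].

Definition knodel_adj (Delta m : nat) : rel (knodel_vertex m) :=
  fun x y =>
    match x, y with
    | (false, j), (true, j') => knodel_arc Delta j j'
    | (true, j'), (false, j) => knodel_arc Delta j j'
    | _, _ => false
    end.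

(* Domination in the induced subgraph G[V] (G given by a relation e). *)
Definition dominating (T : finType) (e : rel T) (V D : {set T}) : bool :=
  (D \subset V) && [forall v in V, (v \in D) || [exists u in D, e u v]].

(* domination number of G[V]; V itself is dominating, so #|V| bounds it *)
Definition gamma (T : finType) (e : rel T) (V : {set T}) : nat :=
  \big[minn/#|V|]_(D : {set T} | dominating e V D) #|D|.

Definition gamma_stable (T : finType) (e : rel T) : Prop :=
  forall u : T, gamma e ([set: T] :\ u) = gamma e [set: T].

Definition knodel_graph_W (Delta n : nat) : rel (knodel_vertex n./2) := @knodel_adj Delta n./2.
Arguments knodel_graph_W : clear implicits.

From mathcomp Require Import all_boot all_order all_algebra zify.
Set Implicit Arguments. Unset Strict Implicit. Unset Printing Implicit Defensive.
Import Order.TTheory GRing.Theory.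

(* Write m = n/2 and view the vertices of W_{4,n} as two copies of Z_m, the
   first-side vertex j being adjacent to the second-side vertices j + s,
   s in S = {0, 1, 3, 7}.  Rotations j |-> j + c (on both sides) and the flip
   exchanging (1, j) with (2, -j) are automorphisms.  Hence it suffices to exhibit
   one dominating set of size 2 ceil(m/5) and to show that every set dominating
   all vertices but one has at least that size.
   The residue class 0 mod 5 on the first side together with the class 4 mod 5
   on the second side dominates, up to the wrap-around of Z_m when m = 2 mod 5,
   which the single extra vertex (2, 2) repairs.  Conversely a vertex dominates
   at most 5 vertices, which gives the bound (2m - 1)/5, enough when 5 | m.
   When m = 5k + 2 a set of size 2k + 1 would force its first-side part A to
   have k elements with the translates A + s (s in S) pairwise disjoint, i.e.
   no two elements of A differ by 1, 2, 3, 4, 6 or 7.  Such an A does not exist: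
   the blocks A + [0, 5) leave exactly two points of Z_m uncovered, while a block
   a + [0, 5) not immediately followed by the block a + 5 + [0, 5) leaves the
   three points a + 5, a + 6, a + 7 uncovered. *)

Section Domination.

Variables (T : finType) (e : rel T).

Definition closed_nbhd (D : {set T}) : {set T} :=
  D :|: [set v | [exists w in D, e w v]].

Lemma dominatingE V D :
  dominating e V D = (D \subset V) && (V \subset closed_nbhd D).
Proof.
by congr andb; apply/forall_inP/subsetP => dom v /dom; rewrite !inE.
Qed.

Lemma gamma_le_card (V D : {set T}) : dominating e V D -> gamma e V <= #|D|.
Proof. by move=> domD; rewrite /gamma -minEnat; apply: (@bigmin_le_cond _ nat). Qed.

Lemma le_gamma (V : {set T}) c :
  (forall D, dominating e V D -> c <= #|D|) -> c <= gamma e V.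
Proof.
move=> lb; rewrite /gamma -minEnat; apply: (@le_bigmin _ nat) => //.
by apply: lb; rewrite dominatingE subxx; apply/subsetP => v vV; rewrite inE vV.
Qed.

Section Automorphism.

Variables (f g : T -> T).
Hypotheses (fK : cancel f g) (gK : cancel g f) (ef : forall x y, e (f x) (f y) = e x y).

Lemma closed_nbhd_imset (D : {set T}) : closed_nbhd (f @: D) = f @: closed_nbhd D.
Proof.
apply/setP => v; rewrite !(can_imset_pre _ fK) !inE.
congr orb; apply/exists_inP/exists_inP => [[w]|[w wD]].
  by rewrite inE => wD ewv; exists (g w); rewrite // -ef !gK.
by rewrite -ef gK => ewv; exists (f w); rewrite // inE fK.
Qed.

Lemma imset_setC1 u : f @: [set~ u] = [set~ f u].
Proof.
apply/setP => v; rewrite (can_imset_pre _ fK) !inE.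
by congr negb; apply/eqP/eqP => [<-|->]; rewrite ?gK ?fK.
Qed.

Lemma imset_setT : f @: setT = setT.
Proof. by rewrite (can_imset_pre _ fK) preimsetT. Qed.

End Automorphism.

Lemma gamma_stable_of_bounds g :
  (forall u D, [set~ u] \subset closed_nbhd D -> g <= #|D|) ->
  (forall u, exists D, [/\ dominating e setT D, u \notin D & #|D| <= g]) ->
  gamma_stable e.
Proof.
move=> lb ub u; have [D [domD uD cardD]] := ub u.
have domDu : dominating e (setT :\ u) D.
  move: domD; rewrite !dominatingE => /andP[_ covD].
  apply/andP; split; last exact: subset_trans (subsetDl _ _) covD.
  by apply/subsetP => v vD; rewrite !inE andbT; apply: contraNneq uD => <-.
have lbV (V : {set T}) : [set~ u] \subset V -> g <= gamma e V.
  move=> uV; apply: le_gamma => D' /[!dominatingE] /andP[_ VD'].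
  exact/lb/(subset_trans uV VD').
have := gamma_le_card domD; have := gamma_le_card domDu.
have := lbV _ (subsetT [set~ u]); have := lbV (setT :\ u); rewrite setTD subxx.
lia.
Qed.

End Domination.

Section Imset2Card.

Variables (aT aT2 rT : finType) (f : aT -> aT2 -> rT) (A : {set aT}) (B : {set aT2}).

Lemma leq_card_imset2 : #|f @2: (A, B)| <= #|A| * #|B|.
Proof. by rewrite curry_imset2X -cardsX leq_imset_card. Qed.

Lemma card_imset2P :
  reflect {in setX A B &, injective (uncurry f)} (#|f @2: (A, B)| == #|A| * #|B|).
Proof. by rewrite curry_imset2X -cardsX; apply: imset_injP. Qed.

End Imset2Card.

Lemma card_residue_class n d r q : 0 < d -> n.+1 <= q * d + r ->
  #|[set j : 'I_n.+1 | j %% d == r]| <= q.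
Proof.
move=> d_gt0 nq.
have sub : [set j : 'I_n.+1 | j %% d == r] \subset [set inord (i * d + r) | i : 'I_q].
  apply/subsetP => j; rewrite inE => /eqP jr.
  have jq : j %/ d < q.
    rewrite -(ltn_pmul2r d_gt0) -(ltn_add2r r) -{1}jr -divn_eq.
    exact: leq_trans (ltn_ord j) nq.
  by apply/imsetP; exists (Ordinal jq) => //=; rewrite -jr -divn_eq inord_val.
rewrite -[q in _ <= q]card_ord.
exact: leq_trans (subset_leq_card sub) (leq_imset_card _ _).
Qed.

Section ZnArith.

Variable p : nat.
Local Notation m := p.+2.
Local Open Scope ring_scope.

Lemma val_natZn a : (a < m)%N -> (a%:R : 'I_m) = a :> nat.
Proof. by move=> am; rewrite /= (@val_Zp_nat m) // modn_small. Qed.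

Lemma natZn_eq a b : (a < m)%N -> (b < m)%N -> (a%:R == b%:R :> 'I_m) = (a == b)%N.
Proof. by move=> am bm; rewrite -val_eqE /= !val_natZn. Qed.

Lemma modn_wrap a b : (a < m)%N -> (b <= m)%N ->
  ((a + b) %% m)%N = if (a + b < m)%N then (a + b)%N else (a + b - m)%N.
Proof.
move=> am bm; case: ltnP => [/modn_small//|le_m].
by rewrite -{1}(subnK le_m) modnDr modn_small //; lia.
Qed.

Lemma addZn1_closed (P : {set 'I_m}) z :
  (forall y, y \in P -> y + 1 \in P) -> z \in P -> P = setT.
Proof.
move=> P1 zP; apply/setP => w; rewrite inE -(subrKC z w) -[w - z]natr_Zp.
elim: (val (w - z)) => [|k IHk]; first by rewrite addr0.
by rewrite mulrSr addrA P1.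
Qed.

End ZnArith.

Section NearPacking.

Variables (p : nat) (X : {set 'I_p.+2}).
Local Notation m := p.+2.
Local Open Scope ring_scope.
Hypotheses (m_gt2 : (2 < m)%N)
  (sparse : forall x y, x \in X -> y \in X ->
     forall d, (0 < d < 8)%N -> d != 5%N -> y != x + d%:R).

Definition blocks5 : {set 'I_m} := [set x + (val i)%:R | x in X, i in [set: 'I_5]].

Lemma card_blocks5 : #|blocks5| = (#|X| * 5)%N.
Proof.
rewrite -[5%N in RHS]card_ord -cardsT; apply/eqP/card_imset2P.
move=> [x i] [y j]; rewrite !inE /= => /andP[xX _] /andP[yX _].
wlog ij : x y i j xX yX / (i <= j)%N.
  by move=> wlog; case: (leqP i j) => [|/ltnW] ij eq_xy; [|symmetry]; apply: wlog.
move=> eq_xy; have x_y : x = y + (j - i)%:R by rewrite natrB // addrA -eq_xy addrK.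
have [ji0|ji_gt0] := posnP (j - i).
  have -> : i = j by apply/val_inj => /=; lia.
  by rewrite x_y ji0 addr0.
have j_lt5 := ltn_ord j.
by move/eqP: x_y; rewrite (negbTE (sparse yX xX _ _)) //; lia.
Qed.

Lemma blocks5_succ x : (#|~: blocks5| < 3)%N -> x \in X -> x + 5%:R \in X.
Proof.
move=> few xX; apply/negPn/negP => x5X; move: few; apply/negP; rewrite -leqNgt.
pose w := x + 5%:R.
have outside k : (k < 3)%N -> w + k%:R \in ~: blocks5.
  move=> k3; rewrite inE; apply/imset2P => -[y i yX _ eq_y].
  have i_le : (i <= 5 + k)%N by have := ltn_ord i; lia.
  have y_x : y = x + (5 + k - i)%:R.
    by rewrite natrB // (natrD _ 5) addrA [x + _]addrA -/w eq_y addrK.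
  have [d5|d5] := eqVneq (5 + k - i)%N 5%N; first by move: yX; rewrite y_x d5 (negbTE x5X).
  by move/eqP: y_x; rewrite (negbTE (sparse xX yX _ _)) //; have := ltn_ord i; lia.
have <- : #|[set w + (val k)%:R | k : 'I_3]| = 3%N.
  rewrite card_imset ?card_ord // => a b /addrI/eqP.
  by rewrite natZn_eq ?(leq_trans (ltn_ord _) m_gt2) // => /eqP/val_inj.
by apply/subset_leq_card/subsetP => _ /imsetP[k _ ->]; apply/outside/ltn_ord.
Qed.

Lemma sparse_card_neq : (5 * #|X| + 2 != m)%N.
Proof.
apply/eqP => cardX.
have few : (#|~: blocks5| < 3)%N.
  by have := cardsC blocks5; rewrite card_blocks5 card_ord; lia.
have [x xX] : exists x, x \in X by apply/card_gt0P; lia.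
have blocks5_1 y : y \in blocks5 -> y + 1 \in blocks5.
  case/imset2P => z i zX _ ->; apply/imset2P.
  have [i4|i4] := ltnP i 4.
    by exists z (Ordinal (i4 : (i.+1 < 5)%N)); rewrite ?inE // mulrSr addrA.
  exists (z + 5%:R) ord0; rewrite ?inE ?blocks5_succ // addr0 -addrA -mulrSr.
  by congr (_ + _%:R) => /=; have := ltn_ord i; lia.
have := card_blocks5; rewrite (addZn1_closed blocks5_1 (_ : x + 0%:R \in blocks5)).
  by rewrite cardsT card_ord; lia.
by apply/imset2P; exists x ord0; rewrite ?inE.
Qed.

End NearPacking.

Section Knodel.

Variables (Delta p : nat).
Local Notation m := p.+2.
Local Notation adj := (@knodel_adj Delta m).
Implicit Types (i j : 'I_m) (D : {set knodel_vertex m}).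

Definition knodel_shifts : {set 'I_m} := [set (2 ^ k - 1)%:R%R | k : 'I_Delta].
Local Notation S := knodel_shifts.

Lemma knodel_arcE i j : knodel_arc Delta i j = (j - i \in S)%R.
Proof.
have arc_shift k : (val j == (val i + 2 ^ k - 1) %% m) = (j - i == (2 ^ k - 1)%:R)%R.
  by rewrite subr_eq addrC -val_eqE /= (@val_Zp_nat m) // modnDmr addnBA ?expn_gt0.
rewrite /knodel_arc; apply/existsP/imsetP => [[k hk]|[k _ hk]]; exists k => //.
  by apply/eqP; rewrite -arc_shift.
by rewrite arc_shift hk.
Qed.

Lemma mem_knodel_shifts k : k < Delta -> ((2 ^ k - 1)%:R \in S)%R.
Proof. by move=> kD; apply/imsetP; exists (Ordinal kD). Qed.

Definition fibre b D : {set 'I_m} := [set j | (b, j) \in D].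

Lemma card_fibres D : #|D| = #|fibre false D| + #|fibre true D|.
Proof.
rewrite -!sum1_card big_mkcond.
rewrite (eq_bigr (fun x => if (x.1, x.2) \in D then 1 else 0)); last by case.
rewrite -(pair_bigA _ (fun b j => if (b, j) \in D then 1 else 0)) big_bool /= addnC.
by congr (_ + _); rewrite [RHS]big_mkcond; apply: eq_bigr => j _; rewrite inE.
Qed.

Lemma fibre_false_nbhd D :
  fibre false (closed_nbhd adj D) =
    fibre false D :|: [set y - s | y in fibre true D, s in S]%R.
Proof.
apply/setP => j; rewrite !inE; congr orb; apply/exists_inP/imset2P.
  case=> -[[] y] // yD; rewrite /= knodel_arcE => yjS.
  by exists y (y - j)%R; rewrite ?inE // opprB addrC subrK.
case=> y s yB sS ->; exists (true, y); first by rewrite inE in yB.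
by rewrite /= knodel_arcE opprB addrC subrK.
Qed.

Lemma fibre_true_nbhd D :
  fibre true (closed_nbhd adj D) =
    fibre true D :|: [set x + s | x in fibre false D, s in S]%R.
Proof.
apply/setP => j; rewrite !inE; congr orb; apply/exists_inP/imset2P.
  case=> -[[] x] // xD; rewrite /= knodel_arcE => xjS.
  by exists x (j - x)%R; rewrite ?inE // addrC subrK.
case=> x s xA sS ->; exists (false, x); first by rewrite inE in xA.
by rewrite /= knodel_arcE addrC addKr.
Qed.

Definition knodel_rotate c (v : knodel_vertex m) : knodel_vertex m := (v.1, v.2 + c)%R.

Definition knodel_flip (v : knodel_vertex m) : knodel_vertex m := (~~ v.1, - v.2)%R.

Lemma knodel_adj_rotate c x y : adj (knodel_rotate c x) (knodel_rotate c y) = adj x y.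
Proof. by case: x y => [[] i] [[] j]; rewrite //= !knodel_arcE opprD addrACA subrr addr0. Qed.

Lemma knodel_adj_flip x y : adj (knodel_flip x) (knodel_flip y) = adj x y.
Proof. by case: x y => [[] i] [[] j]; rewrite //= !knodel_arcE opprK addrC. Qed.

Lemma knodel_rotateK c : cancel (knodel_rotate c) (knodel_rotate (- c)%R).
Proof. by case=> b j; rewrite /knodel_rotate /= addrK. Qed.

Lemma knodel_flipK : involutive knodel_flip.
Proof. by case=> b j; rewrite /knodel_flip /= negbK opprK. Qed.

Lemma knodel_rotateNK c : cancel (knodel_rotate (- c)%R) (knodel_rotate c).
Proof. by rewrite -{2}[c]opprK; apply: knodel_rotateK. Qed.

Lemma knodel_dominating_rotate D g :
  dominating adj setT D -> #|D| <= g -> (forall b, exists j, (b, j) \notin D) ->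
  forall u, exists D', [/\ dominating adj setT D', u \notin D' & #|D'| <= g].
Proof.
move=> domD cardD avoid [b i]; have [j bjD] := avoid b.
pose c := (i - j)%R; have rotK := knodel_rotateK c; have rotNK := knodel_rotateNK c.
exists (knodel_rotate c @: D); split.
- move: domD; rewrite !dominatingE !subsetT /=.
  rewrite (closed_nbhd_imset rotK rotNK (knodel_adj_rotate c)).
  by move/(imsetS (knodel_rotate c)); rewrite (imset_setT rotK).
- by rewrite (can_imset_pre _ rotK) inE /knodel_rotate /= opprB subrKC.
- by rewrite card_imset //; apply: can_inj rotK.
Qed.

Lemma knodel_cover_wlog D u : [set~ u] \subset closed_nbhd adj D ->
  exists i D', [set~ (true, i)] \subset closed_nbhd adj D' /\ #|D'| = #|D|.
Proof.
case: u => -[] i coverD; first by exists i, D.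
exists (- i)%R, (knodel_flip @: D); split; last exact/card_imset/inv_inj/knodel_flipK.
rewrite (closed_nbhd_imset knodel_flipK knodel_flipK knodel_adj_flip).
rewrite -[(true, _)]/(knodel_flip (false, i)) -(imset_setC1 knodel_flipK knodel_flipK).
exact: imsetS.
Qed.

Lemma card_knodel_shifts : #|S| <= Delta.
Proof. by rewrite -[X in _ <= X]card_ord leq_imset_card. Qed.

Lemma knodel_cover_bounds D i :
  [set~ (true, i)] \subset closed_nbhd adj D ->
  m <= #|fibre false D| + #|fibre true D| * #|S| /\
  m.-1 <= #|fibre true D| + #|[set x + s | x in fibre false D, s in S]%R|.
Proof.
move=> coverD; split.
  apply: (@leq_trans #|fibre false (closed_nbhd adj D)|).
    rewrite -[m in m <= _]card_ord -cardsT; apply/subset_leq_card/subsetP => j _.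
    by rewrite inE (subsetP coverD) // !inE.
  rewrite fibre_false_nbhd; apply: leq_trans (leq_card_setU _ _) _.
  by rewrite leq_add2l leq_card_imset2.
apply: (@leq_trans #|[set~ i]|); first by rewrite cardsC1 card_ord.
apply: (@leq_trans #|fibre true (closed_nbhd adj D)|).
  apply/subset_leq_card/subsetP => j; rewrite in_setC1 => ji.
  by rewrite inE (subsetP coverD) // !inE.
by rewrite fibre_true_nbhd leq_card_setU.
Qed.

Lemma knodel_nbhd_lb D u :
  [set~ u] \subset closed_nbhd adj D -> 2 * m <= Delta.+1 * #|D| + 1.
Proof.
case/knodel_cover_wlog => i [D' [coverD' <-]].
have [cover1 cover2] := knodel_cover_bounds coverD'.
have {}cover2 : m.-1 <= #|fibre true D'| + #|fibre false D'| * #|S|.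
  by apply: leq_trans cover2 _; rewrite leq_add2l leq_card_imset2.
have leA : #|fibre false D'| * #|S| <= #|fibre false D'| * Delta.
  by rewrite leq_mul2l card_knodel_shifts orbT.
have leB : #|fibre true D'| * #|S| <= #|fibre true D'| * Delta.
  by rewrite leq_mul2l card_knodel_shifts orbT.
rewrite card_fibres [Delta.+1 * _]mulSn mulnDr ![Delta * _]mulnC; lia.
Qed.

End Knodel.

Section Knodel4.

Variable p : nat.
Local Notation m := p.+2.
Local Notation adj := (@knodel_adj 4 m).
Local Notation S := (knodel_shifts 4 p).
Hypothesis m_ge8 : 8 <= m.
(* Typing D through knodel_vertex, as in section Knodel, keeps the atoms #|D|
   syntactically equal to those of knodel_nbhd_lb, which lia requires. *)
Implicit Types (D : {set knodel_vertex m}).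

Lemma mem_knodel4_shifts s : s \in [:: 0; 1; 3; 7] -> (s%:R \in S)%R.
Proof.
rewrite !inE => /or4P[] /eqP->.
- exact: (@mem_knodel_shifts 4 p 0).
- exact: (@mem_knodel_shifts 4 p 1).
- exact: (@mem_knodel_shifts 4 p 2).
- exact: (@mem_knodel_shifts 4 p 3).
Qed.

Lemma knodel4_dominating_pred (PA PB : pred nat) :
  (forall j, j < m -> PA j \/ exists2 s, s \in [:: 0; 1; 3; 7] & PB ((j + s) %% m)) ->
  (forall j, j < m -> PB j \/ exists2 s, s \in [:: 0; 1; 3; 7] & PA ((j + (m - s)) %% m)) ->
  dominating adj setT [set v : knodel_vertex m | if v.1 then PB v.2 else PA v.2].
Proof.
have s_lt s : s \in [:: 0; 1; 3; 7] -> s < m by rewrite !inE => /or4P[] /eqP->; lia.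
move=> coverA coverB; rewrite dominatingE subsetT.
apply/subsetP => -[[] j] _; rewrite !inE /=.
  have [->//|[s sS PAs]] := coverB j (ltn_ord j).
  apply/orP; right; apply/exists_inP; exists (false, j - s%:R)%R.
    by rewrite inE /= val_natZn ?s_lt // modnDmr.
  by rewrite /= knodel_arcE opprB subrKC mem_knodel4_shifts.
have [->//|[s sS PBs]] := coverA j (ltn_ord j).
apply/orP; right; apply/exists_inP; exists (true, j + s%:R)%R.
  by rewrite inE /= val_natZn ?s_lt.
by rewrite /= knodel_arcE addrC addKr mem_knodel4_shifts.
Qed.

(* The vertex (true, 2) repairs the wrap-around when m = 2 (mod 5). *)
Definition knodel4_dominator : {set knodel_vertex m} :=
  [set v : knodel_vertex m | if v.1 then (v.2 %% 5 == 4) || (m %% 5 == 2) && (v.2 == 2 :> nat)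
                              else v.2 %% 5 == 0].

Lemma knodel4_dominator_dominating :
  m %% 5 = 0 \/ m %% 5 = 2 -> dominating adj setT knodel4_dominator.
Proof.
move=> m5; apply: (@knodel4_dominating_pred (fun j => j %% 5 == 0)
  (fun j => (j %% 5 == 4) || (m %% 5 == 2) && (j == 2))) => j jm.
all: have := ltn_pmod j (isT : 0 < 5).
{ case Er: (j %% 5) => [|[|[|[|[|r]]]]] // _;
    [by left | right; exists 3 | right; exists 7 | right; exists 1 | right; exists 0] => //.
  all: rewrite (modn_wrap jm); [case: ltnP => ?; lia | lia]. }
move=> j_lt5; have [PBj|PBj] := boolP ((j %% 5 == 4) || (m %% 5 == 2) && (j == 2)).
  by left.
right.
move: j_lt5 PBj; case Er: (j %% 5) => [|[|[|[|[|r]]]]] // _ PBj;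
  [exists 0 | exists 1 | exists 7 | exists 3] => //.
all: rewrite (modn_wrap jm); [case: ltnP => ?; lia | lia].
Qed.

Lemma card_knodel4_dominator :
  m %% 5 = 0 \/ m %% 5 = 2 -> #|knodel4_dominator| <= 2 * ((m + 4) %/ 5).
Proof.
have cardA : #|fibre false knodel4_dominator| <= (m + 4) %/ 5.
  rewrite (_ : fibre false _ = [set j : 'I_m | j %% 5 == 0]).
    by apply: card_residue_class; lia.
  by apply/setP => j; rewrite !inE.
have cardB : #|fibre true knodel4_dominator| <= m %/ 5 + (m %% 5 == 2).
  set patch := [set j : 'I_m | (m %% 5 == 2) && (j == 2 :> nat)].
  have sub : fibre true knodel4_dominator \subset [set j : 'I_m | j %% 5 == 4] :|: patch.
    by apply/subsetP => j; rewrite !inE.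
  apply: leq_trans (subset_leq_card sub) _ => {sub}; apply: leq_trans (leq_card_setU _ _) _.
  apply: leq_add; first by apply: card_residue_class; lia.
  case: (m %% 5 == 2) in patch *.
    apply/card_le1_eqP => x y; rewrite !inE => /eqP x2 /eqP y2.
    by apply/val_inj; rewrite /= x2 y2.
  by rewrite leqn0 cards_eq0; apply/eqP/setP => j; rewrite !inE.
by rewrite card_fibres; case=> m5; rewrite m5 in cardB; lia.
Qed.

Lemma knodel4_packing_sparse (A : {set 'I_m}) :
  #|[set x + s | x in A, s in S]%R| = #|A| * #|S| ->
  forall x y, x \in A -> y \in A -> forall d, 0 < d < 8 -> d != 5 -> (y != x + d%:R)%R.
Proof.
move=> /eqP/card_imset2P inj x y xA yA d d08 d5; apply/eqP => y_x.
have diff s s' : s \in [:: 0; 1; 3; 7] -> s' \in [:: 0; 1; 3; 7] -> s' < s < 8 ->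
    y = (x + (s - s')%:R)%R -> False.
  move=> sS s'S /andP[s's s8] y_xs.
  have := inj (y, s'%:R)%R (x, s%:R)%R; rewrite !inE /= yA xA !mem_knodel4_shifts //.
  rewrite y_xs natrB ?(ltnW s's) // -addrA subrK => /(_ isT isT erefl) [_ /eqP].
  by rewrite natZn_eq; lia.
case: d d08 d5 y_x => [|[|[|[|[|[|[|[|d]]]]]]]] // _ _ y_x.
- exact: (diff 1 0).
- exact: (diff 3 1).
- exact: (diff 3 0).
- exact: (diff 7 3).
- exact: (diff 7 1).
- exact: (diff 7 0).
Qed.

Lemma knodel4_nbhd_lb D u : m %% 5 = 0 \/ m %% 5 = 2 ->
  [set~ u] \subset closed_nbhd adj D -> 2 * ((m + 4) %/ 5) <= #|D|.
Proof.
case=> m5 coverD.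
  have [t m_t] : exists t, m = 5 * t by exists (m %/ 5); lia.
  rewrite (_ : (m + 4) %/ 5 = t); last lia.
  by clear m5; have := knodel_nbhd_lb coverD; lia.
have [k m_k] : exists k, m = 5 * k + 2 by exists (m %/ 5); lia.
rewrite (_ : (m + 4) %/ 5 = k.+1); last lia.
clear m5; have [i [D' [coverD' <-]]] := knodel_cover_wlog coverD.
have [cover1 cover2] := knodel_cover_bounds coverD'.
have S4 := @card_knodel_shifts 4 p.
have leA : #|fibre false D'| * #|S| <= #|fibre false D'| * 4 by rewrite leq_mul2l S4 orbT.
have leB : #|fibre true D'| * #|S| <= #|fibre true D'| * 4 by rewrite leq_mul2l S4 orbT.
have sumsetA : #|[set x + s | x in fibre false D', s in S]%R| <= #|fibre false D'| * #|S|.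
  exact: leq_card_imset2.
rewrite card_fibres leqNgt; apply/negP => small.
have packed : #|[set x + s | x in fibre false D', s in S]%R| = #|fibre false D'| * #|S|.
  by lia.
have m_gt2 : 2 < m by lia.
by apply/negP: (sparse_card_neq m_gt2 (knodel4_packing_sparse packed)); apply/eqP; lia.
Qed.

Lemma knodel4_gamma_stable : m %% 5 = 0 \/ m %% 5 = 2 -> gamma_stable adj.
Proof.
move=> m5; apply: (@gamma_stable_of_bounds _ _ (2 * ((m + 4) %/ 5))).
  by move=> u D; apply: knodel4_nbhd_lb.
apply: (knodel_dominating_rotate (knodel4_dominator_dominating m5)).
  exact: card_knodel4_dominator.
by case; [exists ord0 | exists (Ordinal (isT : 1 < m))]; rewrite inE /= ?andbF.
Qed.

End Knodel4.

Theorem lemma4p2 (n : nat) :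
  16 <= n -> ~~ odd n -> (n %% 10 = 0 \/ n %% 10 = 4) ->
  gamma_stable (knodel_graph_W 4 n).
Proof.
move=> n16 n_even n10; have := odd_double_half n; rewrite (negbTE n_even) add0n -muln2.
rewrite /knodel_graph_W; have [p ->] : exists p, n./2 = p.+2 by exists n./2.-2; lia.
by move=> n_eq; apply: knodel4_gamma_stable; lia.
Qed.
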